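(* Let $D$ be a tournament and $T\subseteq V(D)$. Suppose an arc $e\in A(D)$ is contained in some minimum-size $T$-feedback arc set of $D$, and let $D'$ be the tournament obtained from $D$ by reversing the arc $e$. Then for every arc set $S$ with $e\in S$: $S$ is a minimum $T$-feedback arc set of $D$ if and only if $S\setminus\{e\}$ is a minimum $T$-feedback arc set of $D'$.
   Context: A $T$-cycle is a directed cycle containing at least one vertex of $T$. A $T$-feedback arc set of a digraph $D$ is a set $S\subseteq A(D)$ such that $D-S$ contains no $T$-cycle; it is minimum if it has the smallest possible size. *)

From mathcomp Require Import all_boot.
Set Implicit Arguments. Unset Strict Implicit. Unset Printing Implicit Defensive.

Definition arcs (V : finType) (D : rel V) : {set V * V} :=
  [set p | D p.1 p.2].

Definition tournament (V : finType) (D : rel V) : Prop :=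
  (forall x, ~~ D x x) /\
  (forall x y, x != y -> (D x y (+) D y x)).

Definition del_arcs (V : finType) (D : rel V) (S : {set V * V}) : rel V :=
  fun x y => D x y && ((x, y) \notin S).

(* A directed cycle: a nonempty sequence of distinct vertices
   c = [v0; ...; v_{k-1}] with arcs v_i -> v_{i+1} and v_{k-1} -> v0. *)
Definition dicycle (V : finType) (D : rel V) (c : seq V) : bool :=
  [&& c != [::], uniq c & cycle D c].

Definition Tcycle (V : finType) (D : rel V) (T : {set V}) (c : seq V) : bool :=
  dicycle D c && has (mem T) c.

Definition T_fas (V : finType) (D : rel V) (T : {set V}) (S : {set V * V}) : Prop :=
  S \subset arcs D /\ forall c, ~~ Tcycle (del_arcs D S) T c.

Definition min_T_fas (V : finType) (D : rel V) (T : {set V}) (S : {set V * V}) : Prop :=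
  T_fas D T S /\ forall S', T_fas D T S' -> #|S| <= #|S'|.

Definition reverse_arc (V : finType) (D : rel V) (e : V * V) : rel V :=
  fun x y => if (x, y) == (e.2, e.1) then true
             else if (x, y) == e then false else D x y.

From mathcomp Require Import all_boot.
Set Implicit Arguments. Unset Strict Implicit. Unset Printing Implicit Defensive.

(* Let G = D - S for a minimum T-feedback arc set S containing e = uv.  Since
   S \ e is not a T-feedback arc set, G + uv has a T-cycle, so G contains a
   path v ~> t ~> u through some t in T.  A T-cycle in G + vu would give a
   path u ~> t' ~> v with t' in T, and the two paths close up into a T-cycle
   of G.  Hence S \ e is a T-feedback arc set of D' = D with e reversed.
   Conversely a T-feedback arc set R of D' gives the T-feedback arc set
   (R \ vu) + uv of D, of size at most |R| + 1; comparing sizes both ways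
   yields the equivalence. *)

Definition has_Tcycle (V : finType) (G : rel V) (T : {set V}) : bool :=
  [exists t in T, exists y, G t y && connect G y t].

Definition add_arc (V : finType) (G : rel V) (a b : V) : rel V :=
  fun x y => G x y || ((x, y) == (a, b)).

Section Tcycles.

Variables (V : finType) (T : {set V}).
Implicit Types (G H : rel V) (x y a b : V).

Lemma has_TcycleP G : reflect (exists c, Tcycle G T c) (has_Tcycle G T).
Proof.
apply: (iffP existsP) => [[t /andP[tT /existsP[y /andP[Gty]]]] | [c]].
  case/connectP=> p Gp; case: (shortenP Gp) => p' Gp' up' _ lt.
  exists (y :: p'); rewrite /Tcycle /dicycle up' /= rcons_path Gp' -lt Gty /=.
  by change (has (mem T) (y :: p')); apply/hasP; exists t; rewrite // lt mem_last.
case/andP=> /and3P[_ _ cycG] /hasP[t tc tT].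
have [i s' ec] := rot_to tc.
have cyc : cycle G (t :: s') by rewrite -ec rot_cycle.
exists t; apply/andP; split=> //; apply/existsP; move: cyc; case: s' {ec} => [|y s'] /=.
  by rewrite andbT => Gtt; exists t; rewrite Gtt connect0.
case/andP=> Gty ys't; exists y; rewrite Gty.
by apply/connectP; exists (rcons s' t); rewrite ?last_rcons.
Qed.

Lemma noTcycleP G : (forall c, ~~ Tcycle G T c) <-> ~~ has_Tcycle G T.
Proof.
split=> [noc | /has_TcycleP noc c]; last by apply/negP => Tc; apply: noc; exists c.
by apply/has_TcycleP => -[c]; apply/negP.
Qed.

Lemma subrel_has_Tcycle G H : subrel G H -> has_Tcycle G T -> has_Tcycle H T.
Proof.
move=> sGH /existsP[t /andP[tT /existsP[y /andP[Gty cyt]]]].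
apply/existsP; exists t; rewrite tT; apply/existsP; exists y.
by rewrite sGH //=; apply: connect_sub cyt => p q /sGH /connect1.
Qed.

Lemma has_Tcycle_connect G x y :
  x \in T -> x != y -> connect G x y -> connect G y x -> has_Tcycle G T.
Proof.
move=> xT xy /connectP[[|z p] /= Gp lastp]; first by rewrite lastp eqxx in xy.
case/andP: Gp => Gxz Gp cyx; apply/existsP; exists x; rewrite xT.
apply/existsP; exists z; rewrite Gxz; apply: connect_trans cyx.
by apply/connectP; exists p.
Qed.

Lemma connect_add_arc G a b x z :
  connect (add_arc G a b) x z ->
  connect G x z \/ connect G x a /\ connect G b z.
Proof.
case/connectP=> p + ->; elim: p x => [|w p IHp] x /=; first by left.
case/andP=> /orP[Gxw | /eqP[-> ->]] /IHp; last by case=> [|[]]; right.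
by case=> [cwz | [cwa cbz]]; [left | right]; rewrite ?(connect_trans (connect1 Gxw)).
Qed.

Lemma has_Tcycle_add_arc G a b :
  has_Tcycle (add_arc G a b) T ->
  has_Tcycle G T \/ exists2 t, t \in T & connect G b t /\ connect G t a.
Proof.
case/existsP=> t /andP[tT /existsP[y /andP[/orP[Gty | /eqP[<- <-]] cyt]]].
  case: (connect_add_arc cyt) => [cyt' | [cya cbt]].
    by left; apply/existsP; exists t; rewrite tT; apply/existsP; exists y; rewrite Gty.
  by right; exists t; rewrite ?(connect_trans (connect1 Gty)).
by right; exists t => //; split; rewrite ?connect0 //; case: (connect_add_arc cyt) => [|[]].
Qed.

End Tcycles.

Lemma T_fasP (V : finType) (D : rel V) (T : {set V}) (S : {set V * V}) :
  T_fas D T S <-> S \subset arcs D /\ ~~ has_Tcycle (del_arcs D S) T.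
Proof. by split=> -[SA noc]; split=> //; apply/noTcycleP. Qed.

Section ReverseArc.

Variables (V : finType) (D : rel V) (T : {set V}) (u v : V).
Implicit Types (S R X Y : {set V * V}).

Lemma arcs_reverse_arc :
  arcs (reverse_arc D (u, v)) = (v, u) |: (arcs D :\ (u, v)).
Proof.
apply/setP=> -[x y]; rewrite !inE /reverse_arc /=.
by case: eqP => [-> | _]; case: eqP.
Qed.

Lemma del_arcs_setD1_sub S :
  subrel (del_arcs D (S :\ (u, v))) (add_arc (del_arcs D S) u v).
Proof.
move=> x y; rewrite /add_arc /del_arcs !inE.
by case: eqP => [-> | _] /=; rewrite ?eqxx ?orbT // orbF.
Qed.

Lemma del_reverse_arc_setD1_sub S :
  subrel (del_arcs (reverse_arc D (u, v)) (S :\ (u, v)))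
         (add_arc (del_arcs D S) v u).
Proof.
move=> x y; rewrite /add_arc /del_arcs /reverse_arc !inE /=.
by case: eqP => _; [rewrite orbT | case: eqP => //= _; rewrite orbF].
Qed.

Lemma del_arcs_sub_reverse_arc X Y :
  ~~ D v u -> (u, v) \in X -> Y :\ (v, u) \subset X ->
  subrel (del_arcs D X) (del_arcs (reverse_arc D (u, v)) Y).
Proof.
move=> Dvu uvX /subsetP YX x y; rewrite /del_arcs /reverse_arc /=.
case: eqP => [[-> ->] | xy_vu]; first by rewrite (negbTE Dvu).
case: eqP => [-> | _]; first by rewrite uvX andbF.
case/andP=> -> xyX; apply/negP => xyY; case/negP: xyX; apply: YX.
by rewrite !inE xyY andbT; apply/eqP.
Qed.

Lemma T_fas_reverse_arc_setD1 S :
  u != v -> min_T_fas D T S -> (u, v) \in S ->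
  T_fas (reverse_arc D (u, v)) T (S :\ (u, v)).
Proof.
move=> uv [/T_fasP[SA noG] minS] uvS; set G := del_arcs D S in noG.
have cycG_uv : has_Tcycle (add_arc G u v) T.
  apply: contraT => noGuv; have /minS : T_fas D T (S :\ (u, v)).
    apply/T_fasP; split; first exact: subset_trans (subsetDl _ _) SA.
    by apply: contra noGuv; apply: subrel_has_Tcycle; apply: del_arcs_setD1_sub.
  by rewrite (cardsD1 (u, v) S) uvS ltnn.
have [|[t tT [cvt ctu]]] := has_Tcycle_add_arc cycG_uv; first by rewrite (negbTE noG).
apply/T_fasP; split.
  by rewrite arcs_reverse_arc; apply/subsetU/orP; right; apply: setSD.
apply: contra noG => /(subrel_has_Tcycle (@del_reverse_arc_setD1_sub S)).
case/has_Tcycle_add_arc=> [// | [t' t'T [cut' ct'v]]].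
have cvt' : connect G v t' := connect_trans cvt (connect_trans ctu cut').
have [t'_eq_v | t'v] := eqVneq t' v; last exact: has_Tcycle_connect t'T t'v ct'v cvt'.
subst t'; apply: has_Tcycle_connect t'T _ (connect_trans cvt ctu) cut'.
by rewrite eq_sym.
Qed.

Lemma T_fas_of_reverse_arc R :
  D u v -> ~~ D v u -> T_fas (reverse_arc D (u, v)) T R ->
  T_fas D T ((u, v) |: (R :\ (v, u))).
Proof.
move=> Duv Dvu /T_fasP[RA noR]; apply/T_fasP; split.
  apply/subsetP=> -[x y]; rewrite !inE => /orP[/eqP[-> ->] // | /andP[xy xyR]].
  move/subsetP/(_ _ xyR): RA; rewrite arcs_reverse_arc !inE (negbTE xy).
  by case/andP.
apply: contra noR; apply: subrel_has_Tcycle; apply: del_arcs_sub_reverse_arc => //.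
  by rewrite !inE eqxx.
exact: subsetUr.
Qed.

Lemma T_fas_of_reverse_arc_setD1 S :
  ~~ D v u -> S \subset arcs D -> (u, v) \in S ->
  T_fas (reverse_arc D (u, v)) T (S :\ (u, v)) -> T_fas D T S.
Proof.
move=> Dvu SA uvS /T_fasP[_ noR]; apply/T_fasP; split => //.
apply: contra noR; apply: subrel_has_Tcycle; apply: del_arcs_sub_reverse_arc => //.
exact: subset_trans (subsetDl _ _) (subsetDl _ _).
Qed.

End ReverseArc.

Lemma tournament_arc (V : finType) (D : rel V) (u v : V) :
  tournament D -> D u v -> u != v /\ ~~ D v u.
Proof.
case=> loopless tour Duv; have uv : u != v.
  by apply: contraTneq Duv => ->; apply: loopless.
by split; last by move: (tour _ _ uv); rewrite Duv.
Qed.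

Lemma card_setU1D1_le (X : finType) (A : {set X}) (x y : X) :
  #|x |: (A :\ y)| <= #|A|.+1.
Proof. by rewrite cardsU1 -add1n leq_add ?leq_b1 ?subset_leq_card ?subsetDl. Qed.

Theorem proposition2 (V : finType) (D : rel V) (T : {set V}) (e : V * V) :
  tournament D ->
  (exists S0 : {set V * V}, min_T_fas D T S0 /\ e \in S0) ->
  forall S : {set V * V}, S \subset arcs D -> e \in S ->
    (min_T_fas D T S <-> min_T_fas (reverse_arc D e) T (S :\ e)).
Proof.
case: e => u v tourD [S0 [minS0 uvS0]] S SA uvS.
have Duv : D u v by move/subsetP/(_ _ uvS): SA; rewrite inE.
have [uv Dvu] := tournament_arc tourD Duv.
split=> [minS | [fS' minS']].
  split=> [|R /(T_fas_of_reverse_arc Duv Dvu) /minS.2 le_S_R].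
    exact: T_fas_reverse_arc_setD1.
  have := leq_trans le_S_R (card_setU1D1_le _ _ _).
  by rewrite (cardsD1 (u, v) S) uvS add1n ltnS.
split=> [|R /minS0.2]; first exact: T_fas_of_reverse_arc_setD1 fS'.
apply: leq_trans; rewrite (cardsD1 (u, v) S) (cardsD1 (u, v) S0) uvS uvS0 leq_add2l.
exact: minS' _ (T_fas_reverse_arc_setD1 uv minS0 uvS0).
Qed.
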